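(* In the setting below, if $p,q\in X$ satisfy $S_p\cap S_q=\emptyset$, then at most one of $p,q$ has a strange index.
   Context: Setting: $E=\{e_0,\dots,e_n\}\subset\mathbb R^n$ is the vertex set of an $n$-simplex with $e_0+\cdots+e_n=0$, and $X\subset\mathbb R^n\setminus\{0\}$ is a finite set with $E\subseteq X$, no element of $X$ a positive multiple of another, such that every $n+1$ points of $X$ are in good position. (A finite set $A$ is in conical position if $0\notin\operatorname{conv}A$ and no point of $A$ lies in the positive hull—set of nonnegative linear combinations—of the other points; it is in good position otherwise.) For $p\in X$, the support $S_p$ is the minimal subset of $E$ whose positive hull contains $p$; then $p=\sum_{e_i\in S_p}\lambda_ie_i$ uniquely with all $\lambda_i>0$. Convention: each $p\in X$ is replaced by the positive multiple for which $\min_{e_i\in S_p}\lambda_i=1$. An element $e_j\in S_p$ is a strange index of $p$ if $\lambda_j>1$ (under these hypotheses there is at most one). *)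

From HB Require Import structures.
From mathcomp Require Import all_boot all_order all_algebra finmap.
From mathcomp Require Import reals.
Set Implicit Arguments. Unset Strict Implicit. Unset Printing Implicit Defensive.
Import Order.TTheory GRing.Theory Num.Theory.
Local Open Scope ring_scope.
Local Open Scope fset_scope.

Section Defs.
Variables (R : realType) (n : nat).
Notation V := 'rV[R]_n.

Definition in_pos_hull (A : {fset V}) (x : V) : Prop :=
  exists w : V -> R, (forall a, a \in A -> 0 <= w a) /\
                     x = \sum_(a <- A) w a *: a.

Definition in_conv (A : {fset V}) (x : V) : Prop :=
  exists w : V -> R, (forall a, a \in A -> 0 <= w a) /\
                     \sum_(a <- A) w a = 1 /\
                     x = \sum_(a <- A) w a *: a.

Definition conical_position (A : {fset V}) : Prop :=
  ~ in_conv A 0 /\ (forall a, a \in A -> ~ in_pos_hull (A `\ a) a).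

Definition good_position (A : {fset V}) : Prop := ~ conical_position A.

(* e : 'I_n.+1 -> V is the vertex family of an n-simplex (affinely independent)
   with e_0 + ... + e_n = 0 *)
Definition simplex_vertices (e : 'I_n.+1 -> V) : Prop :=
  row_free (\matrix_(i < n) (e (lift ord0 i) - e ord0)) /\
  \sum_(i < n.+1) e i = 0.

Definition in_pos_hull_idx (e : 'I_n.+1 -> V) (S : {set 'I_n.+1}) (p : V) : Prop :=
  exists l : 'I_n.+1 -> R, (forall i, i \in S -> 0 <= l i) /\
                           p = \sum_(i in S) l i *: e i.

Definition is_support (e : 'I_n.+1 -> V) (S : {set 'I_n.+1}) (p : V) : Prop :=
  in_pos_hull_idx e S p /\
  (forall S' : {set 'I_n.+1}, S' \proper S -> ~ in_pos_hull_idx e S' p).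

(* e_j is a strange index of p (with support S): writing the normalized
   multiple p / c (c > 0) as sum_{i in S} l_i e_i with all l_i > 0 and
   min_{i in S} l_i = 1, we have l_j > 1. *)
Definition strange_index (e : 'I_n.+1 -> V) (S : {set 'I_n.+1}) (p : V)
    (j : 'I_n.+1) : Prop :=
  j \in S /\
  exists (c : R) (l : 'I_n.+1 -> R),
    0 < c /\ (forall i, i \in S -> 0 < l i) /\
    p = c *: \sum_(i in S) l i *: e i /\
    (forall i, i \in S -> 1 <= l i) /\ (exists2 k, k \in S & l k = 1) /\
    1 < l j.

Definition has_strange_index (e : 'I_n.+1 -> V) (S : {set 'I_n.+1}) (p : V) : Prop :=
  exists j, strange_index e S p j.

Definition admissible_X (e : 'I_n.+1 -> V) (X : {fset V}) : Prop :=
  [/\ forall p, p \in X -> p != 0,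
      forall i, e i \in X,
      forall p q, p \in X -> q \in X -> p != q -> ~ exists2 c : R, 0 < c & p = c *: q
    & forall A : {fset V}, A `<=` X -> #|` A| = n.+1 -> good_position A].

End Defs.

From HB Require Import structures.
From mathcomp Require Import all_boot all_order all_algebra finmap.
From mathcomp Require Import reals lra.
Set Implicit Arguments. Unset Strict Implicit. Unset Printing Implicit Defensive.
Import Order.TTheory GRing.Theory Num.Theory.
Local Open Scope fset_scope.
Local Open Scope ring_scope.

(* Suppose p has a strange index j (l_j > 1, l_r = 1 for some r
   in S_p) and q has a strange index k (m_k > 1, m_s = 1 for some s in S_q),
   with S_p and S_q disjoint.  We show that the n+1 points
       A = {p, q} u {e_i | i <> r, s}
   of X are in conical position, contradicting the hypothesis on X.
   Since e_0,...,e_n is a simplex with barycentre 0, every f with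
   sum_i f_i = 0 is realised as a linear functional on the vertices; in
   particular for all x, y there is a functional psi_xy with
   psi_xy(e_i) = [i = x] - [i = y].  Applying psi_sr, psi_jr, psi_ks and
   psi_ir to a linear relation sum_{b in A} w_b b = 0 shows that such a
   relation that is nonnegative outside one point must vanish (lemma
   [relation_trivial]); this excludes both 0 in conv A and a point of A in
   the positive hull of the others. *)

Definition ev (R : realType) (n : nat) (u : 'cV[R]_n) (x : 'rV[R]_n) : R :=
  (x *m u) 0 0.

Lemma ev_sum (R : realType) (n : nat) (u : 'cV[R]_n) (I : Type) (r : seq I)
    (P : pred I) (w : I -> R) (b : I -> 'rV[R]_n) :
  ev u (\sum_(i <- r | P i) w i *: b i) = \sum_(i <- r | P i) w i * ev u (b i).
Proof.
by rewrite /ev mulmx_suml summxE; apply: eq_bigr => i _; rewrite -scalemxAl mxE.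
Qed.

Lemma sum_pair_indicator (R : realType) (m : nat) (S : {set 'I_m})
    (w : 'I_m -> R) (x y : 'I_m) :
  \sum_(i in S) w i * ((i == x)%:R - (i == y)%:R) =
  (x \in S)%:R * w x - (y \in S)%:R * w y.
Proof.
have indicator z : \sum_(i in S) w i * (i == z)%:R = (z \in S)%:R * w z.
  have [zS|zNS] := boolP (z \in S).
    rewrite (bigD1 z) //= eqxx mulr1 mul1r big1 ?addr0 // => i /andP[_ /negbTE ->].
    exact: mulr0.
  rewrite big1 ?mul0r // => i iS.
  have /negbTE -> : i != z by apply: contraNneq zNS => <-.
  exact: mulr0.
by under eq_bigr do rewrite mulrBr; rewrite sumrB !indicator.
Qed.

Lemma sign_squeeze (R : realType) (x t y : R) :
  0 <= x -> 0 < t -> 0 <= y -> x * t + y = 0 -> x = 0.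
Proof. by move=> *; nra. Qed.

Section DualFunctionals.
Variables (R : realType) (n : nat) (e : 'I_n.+1 -> 'rV[R]_n).
Hypothesis simplex : simplex_vertices e.

(* Any values f_i with sum_i f_i = 0 are the values of a linear functional at
   the vertices: the edge vectors e_i - e_0 form a basis, and the barycentre
   condition forces the value at e_0. *)
Lemma vertex_functional (f : 'I_n.+1 -> R) :
  \sum_i f i = 0 -> exists u, forall i, ev u (e i) = f i.
Proof.
case: simplex => Mfree sum_e sum_f.
set M := \matrix_(i < n) (e (lift ord0 i) - e ord0).
have Munit : M \in unitmx by rewrite -row_free_unit.
set u := invmx M *m \col_i (f (lift ord0 i) - f ord0); exists u.
pose g i := ev u (e i) - f i.
have g_lift i : g (lift ord0 i) = g ord0.
  have edge : ev u (e (lift ord0 i) - e ord0) = f (lift ord0 i) - f ord0.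
    have -> : e (lift ord0 i) - e ord0 = row i M by apply/rowP => k; rewrite !mxE.
    by rewrite /ev -row_mul mulmxA mulmxV // mul1mx !mxE.
  by move: edge; rewrite /g /ev mulmxBl !mxE; lra.
have g_const i : g i = g ord0 by case: (unliftP ord0 i) => [i' ->|->].
have g0 : g ord0 = 0.
  have : \sum_i g i = 0.
    by rewrite sumrB sum_f subr0 /ev -summxE -mulmx_suml sum_e mul0mx mxE.
  under eq_bigr do rewrite g_const.
  by rewrite sumr_const card_ord => /eqP; rewrite mulrn_eq0 => /eqP.
by move=> i; apply/eqP; rewrite -subr_eq0 -/(g i) g_const g0.
Qed.

Lemma dual_pair (x y : 'I_n.+1) :
  exists u, forall i, ev u (e i) = (i == x)%:R - (i == y)%:R.
Proof.
apply: vertex_functional.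
have ones z : \sum_(i < n.+1) ((i == z)%:R : R) = 1.
  by rewrite (bigD1 z) //= eqxx big1 ?addr0 // => i /negbTE ->.
by rewrite sumrB !ones subrr.
Qed.

Lemma ev_dual_pair x y u (c : R) (l : 'I_n.+1 -> R) (S : {set 'I_n.+1}) :
  (forall i, ev u (e i) = (i == x)%:R - (i == y)%:R) ->
  ev u (c *: \sum_(i in S) l i *: e i) =
  c * ((x \in S)%:R * l x - (y \in S)%:R * l y).
Proof.
move=> u_pair; rewrite /ev -scalemxAl mxE -/(ev _ _) ev_sum -sum_pair_indicator.
by congr (_ * _); apply: eq_bigr => i _; rewrite u_pair.
Qed.

(* Distinct indices give distinct vertices (separate them by psi_xy). *)
Lemma simplex_vertices_inj : injective e.
Proof.
move=> x y exy; apply/eqP/negPn/negP => xy.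
have [u u_pair] := dual_pair x y.
move: (u_pair x) (u_pair y); rewrite exy => ->.
by rewrite !eqxx (negbTE xy) eq_sym (negbTE xy) /= ?mulr1n ?mulr0n; lra.
Qed.

End DualFunctionals.

Section StrangePair.
Variables (R : realType) (n : nat) (e : 'I_n.+1 -> 'rV[R]_n).
Hypothesis simplex : simplex_vertices e.

Variables (Sp Sq : {set 'I_n.+1}) (cp cq : R) (l m : 'I_n.+1 -> R).
Variables (j r k s : 'I_n.+1) (p q : 'rV[R]_n).
Hypotheses (disjoint_supports : Sp :&: Sq = set0)
  (jSp : j \in Sp) (rSp : r \in Sp) (kSq : k \in Sq) (sSq : s \in Sq)
  (cp_gt0 : 0 < cp) (cq_gt0 : 0 < cq)
  (l_r : l r = 1) (l_j : 1 < l j) (m_s : m s = 1) (m_k : 1 < m k)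
  (p_def : p = cp *: \sum_(i in Sp) l i *: e i)
  (q_def : q = cq *: \sum_(i in Sq) m i *: e i).

Lemma notin_Sq i : i \in Sp -> i \notin Sq.
Proof.
move=> iSp; apply: contra_eqN disjoint_supports => iSq.
by apply/set0Pn; exists i; rewrite inE iSp.
Qed.

Lemma notin_Sp i : i \in Sq -> i \notin Sp.
Proof. by apply: contraTN; exact: notin_Sq. Qed.

Definition kept := ~: [set r; s].
Definition config := p |` (q |` [fset e i | i in kept]).

Lemma r_neq_s : r != s.
Proof. by apply: contraTneq sSq => <-; exact: notin_Sq. Qed.

(* The functional psi_rs separates p (value cp > 0), q (value -cq < 0)
   and the kept vertices (value 0). *)
Lemma config_separation :
  [/\ p != q, p \notin [fset e i | i in kept] & q \notin [fset e i | i in kept]].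
Proof.
have [u u_rs] := dual_pair simplex r s.
have ev_p : ev u p = cp.
  by rewrite p_def (ev_dual_pair _ _ _ u_rs) rSp (negbTE (notin_Sp sSq)) l_r /=; lra.
have ev_q : ev u q = - cq.
  by rewrite q_def (ev_dual_pair _ _ _ u_rs) sSq (negbTE (notin_Sq rSp)) m_s /=; lra.
have ev_kept i : i \in kept -> ev u (e i) = 0.
  by rewrite !inE negb_or u_rs => /andP[/negbTE -> /negbTE ->]; rewrite subrr.
have notin_kept x : ev u x != 0 -> x \notin [fset e i | i in kept].
  by apply: contra => /imfsetP[i /= iP ->]; rewrite ev_kept ?eqxx.
split.
- apply/eqP => pq; move: ev_p; rewrite pq ev_q => /eqP.
  by rewrite eq_sym -addr_eq0 gt_eqF // addr_gt0.
- by apply: notin_kept; rewrite ev_p gt_eqF.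
- by apply: notin_kept; rewrite ev_q oppr_eq0 gt_eqF.
Qed.

Lemma sum_config (F : 'rV[R]_n -> R) :
  \sum_(b <- config) F b = F p + F q + \sum_(i in kept) F (e i).
Proof.
have [pq pNkept qNkept] := config_separation.
have pNqkept : p \notin q |` [fset e i | i in kept] by rewrite in_fset1U negb_or pq.
rewrite big_fsetU1 // big_fsetU1 // big_imfset /=; last first.
  by move=> ? ? _ _; apply: simplex_vertices_inj.
by rewrite addrA big_enum.
Qed.

Lemma card_config : #|` config| = n.+1.
Proof.
have [pq pNkept qNkept] := config_separation.
have pNqkept : p \notin q |` [fset e i | i in kept] by rewrite in_fset1U negb_or pq.
rewrite cardfsU1 pNqkept cardfsU1 qNkept card_in_imfset /=; last first.
  by move=> ? ? _ _; apply: simplex_vertices_inj.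
have := cardsC [set r; s]; rewrite cards2 r_neq_s card_ord -cardE.
by rewrite addnA.
Qed.

Lemma j_kept : j \in kept.
Proof.
rewrite !inE negb_or; apply/andP; split.
  by apply: contraTneq l_j => ->; rewrite l_r ltxx.
by apply: contraTneq jSp => ->; exact: notin_Sp.
Qed.

Lemma k_kept : k \in kept.
Proof.
rewrite !inE negb_or; apply/andP; split.
  by apply: contraTneq kSq => ->; exact: notin_Sq.
by apply: contraTneq m_k => ->; rewrite m_s ltxx.
Qed.

Lemma r_notin_kept : (r \in kept) = false.
Proof. by rewrite !inE eqxx. Qed.

Lemma s_notin_kept : (s \in kept) = false.
Proof. by rewrite !inE eqxx orbT. Qed.

Lemma ev_relation (w : 'rV[R]_n -> R) x y u :
  \sum_(b <- config) w b *: b = 0 ->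
  (forall i, ev u (e i) = (i == x)%:R - (i == y)%:R) ->
  w p * ev u p + w q * ev u q +
    ((x \in kept)%:R * w (e x) - (y \in kept)%:R * w (e y)) = 0.
Proof.
move=> rel u_xy; rewrite -(sum_pair_indicator kept (w \o e)).
transitivity (ev u (\sum_(b <- config) w b *: b)); last first.
  by rewrite rel /ev mul0mx mxE.
rewrite (ev_sum u config predT w id) sum_config; congr (_ + _).
by apply: eq_bigr => i _; rewrite u_xy.
Qed.

Section Relation.
Variable w : 'rV[R]_n -> R.
Hypothesis relation : \sum_(b <- config) w b *: b = 0.

Lemma relation_sr : w q * cq = w p * cp.
Proof.
have [u u_sr] := dual_pair simplex s r.
have := ev_relation relation u_sr.
rewrite p_def q_def !(ev_dual_pair _ _ _ u_sr) (negbTE (notin_Sp sSq)) rSp sSq.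
rewrite (negbTE (notin_Sq rSp)) s_notin_kept r_notin_kept l_r m_s /=; lra.
Qed.

Lemma relation_jr : w p * cp * (l j - 1) + w (e j) = 0.
Proof.
have [u u_jr] := dual_pair simplex j r.
have := ev_relation relation u_jr.
rewrite p_def q_def !(ev_dual_pair _ _ _ u_jr) jSp rSp (negbTE (notin_Sq jSp)).
rewrite (negbTE (notin_Sq rSp)) j_kept r_notin_kept l_r /=; lra.
Qed.

Lemma relation_ks : w q * cq * (m k - 1) + w (e k) = 0.
Proof.
have [u u_ks] := dual_pair simplex k s.
have := ev_relation relation u_ks.
rewrite p_def q_def !(ev_dual_pair _ _ _ u_ks) kSq sSq (negbTE (notin_Sp kSq)).
rewrite (negbTE (notin_Sp sSq)) k_kept s_notin_kept m_s /=; lra.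
Qed.

Lemma relation_kept i : i \in kept -> w p = 0 -> w q = 0 -> w (e i) = 0.
Proof.
move=> iP wp0 wq0; have [u u_ir] := dual_pair simplex i r.
have := ev_relation relation u_ir.
by rewrite wp0 wq0 iP r_notin_kept /=; lra.
Qed.

(* A relation that is nonnegative outside a single point a is trivial:
   if a is neither p nor e_j, psi_jr forces w_p = 0; otherwise a is neither
   q nor e_k and psi_ks forces w_q = 0.  Then psi_sr and psi_ir conclude. *)
Lemma relation_trivial a :
  (forall b, b \in config -> b != a -> 0 <= w b) ->
  forall b, b \in config -> w b = 0.
Proof.
move=> w_ge0.
have [pq pNkept qNkept] := config_separation.
have kept_config i : i \in kept -> e i \in config.
  by move=> iP; rewrite !in_fset1U in_imfset ?orbT.
have pA : p \in config by rewrite in_fset1U eqxx.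
have qA : q \in config by rewrite !in_fset1U eqxx orbT.
have e_kept i : i \in kept -> e i \in [fset e i | i in kept].
  by move=> iP; rewrite in_imfset.
have eNp i : i \in kept -> e i != p.
  by move=> iP; apply: contraNneq pNkept => <-; exact: e_kept.
have eNq i : i \in kept -> e i != q.
  by move=> iP; apply: contraNneq qNkept => <-; exact: e_kept.
have ejNek : e j != e k.
  by apply: contraTneq jSp => /(simplex_vertices_inj simplex) ->; exact: notin_Sp.
have cancel_pos (x c : R) : 0 < c -> x * c = 0 -> x = 0.
  by move=> c_gt0 /eqP; rewrite mulf_eq0 (gt_eqF c_gt0) orbF => /eqP.
have [wp0 wq0] : w p = 0 /\ w q = 0.
  have [a_pj | /norP[aNp aNej]] := boolP ((a == p) || (a == e j)).
    have qNa : q != a.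
      by case/orP: a_pj => /eqP ->; rewrite eq_sym // eNq ?j_kept.
    have ekNa : e k != a.
      by case/orP: a_pj => /eqP ->; rewrite ?eNp ?k_kept // eq_sym.
    have wq0 : w q = 0.
      apply: (sign_squeeze (t := cq * (m k - 1)) (w_ge0 q qA qNa) _
                (w_ge0 _ (kept_config _ k_kept) ekNa)).
        by rewrite mulr_gt0 // subr_gt0.
      by rewrite mulrA relation_ks.
    by split=> //; apply: (cancel_pos _ _ cp_gt0); rewrite -relation_sr wq0 mul0r.
  have wp0 : w p = 0.
    apply: (sign_squeeze (t := cp * (l j - 1)) (w_ge0 p pA _) _
              (w_ge0 _ (kept_config _ j_kept) _)).
    - by rewrite eq_sym.
    - by rewrite mulr_gt0 // subr_gt0.
    - by rewrite eq_sym.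
    - by rewrite mulrA relation_jr.
  by split=> //; apply: (cancel_pos _ _ cq_gt0); rewrite relation_sr wp0 mul0r.
move=> b; rewrite !in_fset1U => /or3P[/eqP->|/eqP->|/imfsetP[i /= iP ->]] //.
exact: relation_kept.
Qed.

End Relation.

Lemma config_conical : conical_position config.
Proof.
split.
  move=> [w [w_ge0 [w_sum1 w0]]].
  have w_zero := relation_trivial (esym w0) (a := p) (fun b bA _ => w_ge0 b bA).
  move: w_sum1; rewrite big1_seq => [/eqP|b /andP[_ /w_zero] //].
  by rewrite eq_sym oner_eq0.
move=> a aA [w [w_ge0 a_comb]].
pose w' b := if b == a then -1 else w b.
have rel : \sum_(b <- config) w' b *: b = 0.
  rewrite (big_fsetD1 a aA) /= {1}/w' eqxx scaleN1r addrC; apply/eqP.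
  rewrite subr_eq0 [X in _ == X]a_comb; apply/eqP.
  by apply: eq_fbigr => b /fsetD1P[/negbTE bNa _] _; rewrite /w' bNa.
have w'_ge0 b : b \in config -> b != a -> 0 <= w' b.
  by move=> bA bNa; rewrite /w' (negbTE bNa) w_ge0 //; apply/fsetD1P.
have := relation_trivial rel w'_ge0 aA; rewrite /w' eqxx => /eqP.
by rewrite oppr_eq0 oner_eq0.
Qed.

End StrangePair.

Theorem proposition6p4 (R : realType) (n : nat) (e : 'I_n.+1 -> 'rV[R]_n)
    (X : {fset 'rV[R]_n}) :
  simplex_vertices e -> admissible_X e X ->
  forall (p q : 'rV[R]_n) (Sp Sq : {set 'I_n.+1}),
    p \in X -> q \in X -> is_support e Sp p -> is_support e Sq q ->
    Sp :&: Sq = set0 ->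
    ~ (has_strange_index e Sp p /\ has_strange_index e Sq q).
Proof.
move=> simplex [_ e_in_X _ X_good] p q Sp Sq pX qX _ _ disjoint_supports
  [[j [jSp [cp [l [cp_gt0 [_ [p_def [_ [[r rSp l_r] l_j]]]]]]]]]
   [k [kSq [cq [m [cq_gt0 [_ [q_def [_ [[s sSq m_s] m_k]]]]]]]]]].
have config_sub_X : config e r s p q `<=` X.
  apply/fsubsetP => b; rewrite !in_fset1U.
  by case/or3P => [/eqP->|/eqP->|/imfsetP[i _ ->]]; last exact: e_in_X.
apply: (X_good _ config_sub_X).
  exact: (card_config simplex disjoint_supports rSp sSq cp_gt0 cq_gt0 l_r m_s
          p_def q_def).
exact: (config_conical simplex disjoint_supports jSp rSp kSq sSq cp_gt0 cq_gt0
          l_r l_j m_s m_k p_def q_def).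
Qed.
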